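(* For every positive integer $n$, with $P^r_n=\sum_{b\in Z_n^r}\prod_{s=1}^rC_{b_s}$, $$\sum_{\substack{1\le r\le n\\ r\text{ odd}}}P^r_n=nC_{n-1}\qquad\text{and}\qquad\sum_{\substack{1\le r\le n\\ r\text{ even}}}P^r_n=(n-1)C_{n-1}.$$
   Context: $C_m=\frac{1}{m+1}\binom{2m}{m}$ is the $m$-th Catalan number ($C_0=1$) and $Z_n^r=\{(b_1,\dots,b_r)\in\mathbb Z^r: b_s>0\text{ for all }s,\ \sum_{s=1}^rb_s=n\}$. *)

From mathcomp Require Import all_boot.
Set Implicit Arguments. Unset Strict Implicit. Unset Printing Implicit Defensive.

Definition catalan (m : nat) : nat := 'C(m.*2, m) %/ m.+1.

(* P^r_n = sum over compositions b in Z_n^r of prod_s C_{b_s}.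
   Since every part b_s satisfies 0 < b_s <= n, compositions are encoded as
   functions 'I_r -> 'I_n.+1 with all parts positive and sum n. *)
Definition P (r n : nat) : nat :=
  \sum_(b : {ffun 'I_r -> 'I_n.+1} |
          [forall s, 0 < val (b s)] && (\sum_(s < r) val (b s) == n))
    \prod_(s < r) catalan (b s).

From mathcomp Require Import all_boot all_algebra zify ring.
Import GRing.Theory.

(* [P r n] is the coefficient of [x^n] in [(c(x) - 1)^r], where [c] is the
   Catalan generating function; these coefficients are ballot numbers, given
   by a difference of two binomial coefficients and satisfying the recurrence
   coming from [c - 1 = x c^2].  Summed over [r] they telescope to
   ['C(2n-1, n-1) = (2n-1) C_(n-1)]; with alternating signs the recurrence makes
   them telescope to [- C_(n-1)].  Half the sum and half the difference of these
   two totals are the two parity sums. *)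

Lemma catalan_add_bin m : catalan m + 'C(m.*2, m.+1) = 'C(m.*2, m).
Proof.
have mid : m.+1 * 'C(m.*2, m.+1) = m * 'C(m.*2, m).
  by rewrite mul_bin_left -addnn addnK.
have le_mid : 'C(m.*2, m.+1) <= 'C(m.*2, m) by nia.
have cm : 'C(m.*2, m) = m.+1 * ('C(m.*2, m) - 'C(m.*2, m.+1)) by nia.
by rewrite /catalan {1}cm mulKn // subnK.
Qed.

Lemma mul_catalan m : m.+1 * catalan m = 'C(m.*2, m).
Proof.
have := catalan_add_bin m; have := mul_bin_left m.*2 m.
rewrite -addnn addnK; nia.
Qed.

Lemma bin_odd_sym m : 'C(m.*2.+1, m.+1) = 'C(m.*2.+1, m).
Proof. by rewrite -bin_sub; [congr 'C(_, _) | ]; lia. Qed.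

Lemma bin_odd_mid m : 'C(m.*2.+1, m) = m.*2.+1 * catalan m.
Proof.
apply/eqP; rewrite -(eqn_pmul2l (ltn0Sn m)) mulnCA mul_catalan; apply/eqP.
by rewrite -bin_odd_sym -mul_bin_diag.
Qed.

Lemma catalanSS_add_bin m :
  catalan m.+2 + 'C(m.*2.+3, m) = 'C(m.*2.+3, m.+1).
Proof.
have sym : 'C(m.*2.+3, m.+3) = 'C(m.*2.+3, m).
  by rewrite -bin_sub; [congr 'C(_, _) | ]; lia.
have := catalan_add_bin m.+2.
have -> : m.+2.*2 = m.*2.+3.+1 by lia.
have := binS m.*2.+3 m.+2; have := binS m.*2.+3 m.+1; lia.
Qed.

Section Ballot.

Local Open Scope ring_scope.

Definition binz (N : nat) (j : int) : int :=
  if j is Posz k then 'C(N, k)%:R else 0.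

Lemma binz_neg N j : j < 0 -> binz N j = 0.
Proof. by case: j. Qed.

Lemma binzS N j : binz N.+1 j = binz N j + binz N (j - 1).
Proof.
case: j => [[|k] | k] /=; last by [].
- by rewrite !bin0 addr0.
- by rewrite binS natrD subn1.
Qed.

Lemma binzSS N j : binz N.+2 j = binz N j + 2%:R * binz N (j - 1) + binz N (j - 2).
Proof. by rewrite !binzS -!addrA opprD addrA; ring. Qed.

(* The coefficient of [x^n] in [(c(x) - 1)^r]; for [n > 0] it equals
   [r/n * 'C(2n, n - r)]. *)
Definition ballot (r n : nat) : int :=
  if n is m.+1 then binz m.*2.+1 (m.+1%:Z - r%:Z) - binz m.*2.+1 (m%:Z - r%:Z)
  else (r == 0%N)%:R.

Arguments ballot : simpl never.

Lemma ballot0 n : ballot 0 n = (n == 0%N)%:R.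
Proof.
by case: n => [//|m]; rewrite /ballot /= !addn0 bin_odd_sym subrr.
Qed.

Lemma ballot_gt r n : (n < r)%N -> ballot r n = 0.
Proof.
case: n => [|m] h; rewrite /ballot /=; first by case: r h.
by rewrite !binz_neg ?subrr //; lia.
Qed.

Lemma ballot1 n : ballot 1 n.+1 = (catalan n.+1)%:R.
Proof.
case: n => [//|m]; rewrite /ballot /= !subn1 /=.
have := catalanSS_add_bin m.
have -> : m.+1.*2.+1 = m.*2.+3 by lia.
lia.
Qed.

Lemma ballotSS r n :
  ballot r.+1 n.+1 = ballot r n + 2%:R * ballot r.+1 n + ballot r.+2 n.
Proof.
rewrite /ballot; case: n => [|m].
  by case: r => [|r] /=; rewrite ?subnn ?bin0 ?subr0; ring.
have -> : m.+1.*2.+1 = m.*2.+3 by lia.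
rewrite !binzSS.
set a := m.+1%:Z - r%:Z.
have -> : m.+2%:Z - r.+1%:Z = a by rewrite /a; lia.
have -> : m.+1%:Z - r.+1%:Z = a - 1 by rewrite /a; lia.
have -> : m%:Z - r%:Z = a - 1 by rewrite /a; lia.
have -> : m.+1%:Z - r.+2%:Z = a - 2 by rewrite /a; lia.
have -> : m%:Z - r.+1%:Z = a - 2 by rewrite /a; lia.
have -> : m%:Z - r.+2%:Z = a - 3 by rewrite /a; lia.
have -> : a - 1 - 1 = a - 2 by lia.
have -> : a - 1 - 2 = a - 3 by lia.
ring.
Qed.

Definition catalan_pos (k : nat) : nat := (0 < k)%N * catalan k.

Lemma ballot_conv r n :
  \sum_(k < n.+1) (catalan_pos k)%:R * ballot r (n - k) = ballot r.+1 n.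
Proof.
elim: n r => [|n IHn] r; first by rewrite big_ord1 /catalan_pos mul0n mul0r.
case: r => [|r].
- rewrite big_ord_recr big1 => [|k _]; last first.
    by rewrite ballot0 subn_eq0 /= ltnNge leq_ord mulr0.
  by rewrite subnn ballot0 ballot1 mulr1 /= add0r /catalan_pos mul1n.
- rewrite ballotSS -!IHn mulr_sumr -!big_split big_ord_recr subnn.
  rewrite ballot_gt // mulr0 /= addr0; apply: eq_bigr => k _.
  by rewrite /= subSn ?leq_ord // ballotSS; ring.
Qed.

Definition catalan_poly (n : nat) : {poly int} := \poly_(j < n.+1) (catalan_pos j)%:R.

Lemma coef_catalan_poly_exp r n m :
  (m <= n)%N -> ((catalan_poly n) ^+ r)`_m = ballot r m.
Proof.
elim: r m => [|r IHr] m le_mn; first by rewrite expr0 coef1 ballot0.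
rewrite exprS coefM -ballot_conv; apply: eq_bigr => k _.
have le_kn : (k <= n)%N by rewrite (leq_trans _ le_mn) // -ltnS.
by rewrite coef_poly ltnS le_kn IHr // (leq_trans (leq_subr _ _)).
Qed.

Lemma P_coef r n : (P r n)%:R = ((catalan_poly n) ^+ r)`_n.
Proof.
have -> : catalan_poly n ^+ r = \prod_(s < r) catalan_poly n.
  by rewrite prodr_const card_ord.
rewrite /catalan_poly poly_def bigA_distr_bigA coef_sum.
rewrite /P big_mkcond natr_sum; apply: eq_bigr => f _.
rewrite scaler_prod prodrXr coefZ coefXn -natr_prod.
case: (boolP [forall s, (0 < val (f s))%N]) => [pos_f | /forallPn[s f_s0]] /=.
  have -> : (\prod_(s < r) catalan_pos (f s) = \prod_(s < r) catalan (f s))%N.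
    by apply: eq_bigr => s _; rewrite /catalan_pos (forallP pos_f) mul1n.
  by rewrite eq_sym; case: eqP; rewrite ?mulr1 ?mulr0.
by rewrite (bigD1 s) //= /catalan_pos (negbTE f_s0) !mul0n mul0r.
Qed.

Lemma P_ballot r n : (P r n)%:R = ballot r n.
Proof. by rewrite P_coef coef_catalan_poly_exp. Qed.

Lemma sum_ballot m : \sum_(r < m.+2) ballot r m.+1 = 'C(m.*2.+1, m)%:R.
Proof.
pose f r := - binz m.*2.+1 (m.+1%:Z - r%:Z).
rewrite -(big_mkord xpredT (ballot^~ m.+1)) (telescope_sumr_eq f) => [|//|r _].
  rewrite /f binz_neg; last by lia.
  by rewrite oppr0 sub0r opprK /= addn0 bin_odd_sym.
have shift : m.+1%:Z - r.+1%:Z = m%:Z - r%:Z by lia.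
by rewrite /f shift opprK addrC.
Qed.

Lemma ballot01 n : ballot 0 n + ballot 1 n = (catalan n)%:R.
Proof. by case: n => [//|n]; rewrite ballot0 ballot1 add0r. Qed.

Lemma sum_signed_ballot n :
  \sum_(r < n.+2) (-1) ^+ r * ballot r n.+1 = - (catalan n)%:R.
Proof.
pose u s := (-1) ^+ s * (ballot s n + ballot s.+1 n).
rewrite big_ord_recl ballot0 mulr0n mulr0 add0r.
rewrite -(big_mkord xpredT (fun s => (-1) ^+ s.+1 * ballot s.+1 n.+1)).
rewrite (telescope_sumr_eq u) => [|//|s _].
  by rewrite /u (ballot_gt _ _ (ltnSn n)) (ballot_gt _ _ (ltnW (ltnSn n.+1))) addr0 mulr0
    sub0r expr0 mul1r ballot01.
by rewrite ballotSS /u exprS; ring.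
Qed.

Lemma sum_odd_signed {R : pzRingType} (N : nat) (F : nat -> R) :
  (\sum_(r < N | odd r) F r) *+ 2 = \sum_(r < N) F r - \sum_(r < N) (-1) ^+ r * F r.
Proof.
rewrite -sumrB -sumrMnl big_mkcond; apply: eq_bigr => r _.
by rewrite -signr_odd; case: (odd r); rewrite ?mulN1r ?mul1r ?opprK ?subrr ?mulr2n.
Qed.

Lemma sum_even_signed {R : pzRingType} (N : nat) (F : nat -> R) :
  (\sum_(r < N | ~~ odd r) F r) *+ 2 = \sum_(r < N) F r + \sum_(r < N) (-1) ^+ r * F r.
Proof.
rewrite -big_split -sumrMnl big_mkcond; apply: eq_bigr => r _.
by rewrite -signr_odd; case: (odd r); rewrite /= ?mulN1r ?mul1r ?subrr ?mulr2n.
Qed.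

Lemma sum_P_ballot (p : pred nat) n :
  (\sum_(1 <= r < n.+2 | p r) P r n.+1)%:R = \sum_(r < n.+2 | p r) ballot r n.+1 :> int.
Proof.
rewrite -(big_mkord p (ballot^~ n.+1)) [RHS]big_ltn_cond // ballot0 mulr0n add0r if_same.
by rewrite natr_sum; apply: eq_bigr => r _; rewrite P_ballot.
Qed.

End Ballot.

Theorem lemma5p10 (n : nat) : 0 < n ->
  \sum_(1 <= r < n.+1 | odd r) P r n = n * catalan n.-1 /\
  \sum_(1 <= r < n.+1 | ~~ odd r) P r n = n.-1 * catalan n.-1.
Proof.
case: n => [//|m] _ /=.
have := sum_odd_signed m.+2 (ballot^~ m.+1).
have := sum_even_signed m.+2 (ballot^~ m.+1).
rewrite sum_ballot sum_signed_ballot bin_odd_mid.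
rewrite -(sum_P_ballot odd) -(sum_P_ballot (fun r => ~~ odd r)) => even2 odd2.
split; lia.
Qed.
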